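(* Let $n\ge1$, let $\mathcal{Z}=\{z_1,\dots,z_m\}\subset\mathbb{D}^n$ be distinct points, $\mathcal{Q}_{\mathcal{Z}}=\operatorname{span}\{\mathbb{S}(\cdot,z_j):j=1,\dots,m\}$, and $X\in\mathcal{B}(\mathcal{Q}_{\mathcal{Z}})$. Then $XS_{z_i}=S_{z_i}X$ for all $i=1,\dots,n$ (where $S_{z_i}=P_{\mathcal{Q}_{\mathcal{Z}}}T_{z_i}|_{\mathcal{Q}_{\mathcal{Z}}}$) if and only if there exist $w_1,\dots,w_m\in\mathbb{C}$ such that $X^*\mathbb{S}(\cdot,z_j)=w_j\mathbb{S}(\cdot,z_j)$ for all $j=1,\dots,m$.
   Context: $\mathbb{S}(z,w)=\prod_{i=1}^n(1-z_i\bar w_i)^{-1}$ is the Szegő kernel of $\mathbb{D}^n$ and $\mathbb{S}(\cdot,w)(z)=\mathbb{S}(z,w)$, an element of the Hardy space $H^2(\mathbb{T}^n)$. $T_{z_i}$ is multiplication by $z_i$ on $H^2(\mathbb{T}^n)$ and $P_{\mathcal{Q}_{\mathcal{Z}}}$ the orthogonal projection onto $\mathcal{Q}_{\mathcal{Z}}$. *)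

From Stdlib Require Import ClassicalEpsilon.
From HB Require Import structures.
From mathcomp Require Import all_boot all_order all_algebra.
From mathcomp Require Import all_classical all_reals all_analysis.
From mathcomp Require Import complex.

Set Implicit Arguments.
Unset Strict Implicit.
Unset Printing Implicit Defensive.

Import Order.TTheory GRing.Theory Num.Theory numFieldNormedType.Exports.
Local Open Scope ring_scope.

(** Model of the Hardy space H^2(T^n): an element f of H^2 is identified with
    its family of Taylor/Fourier coefficients (f_alpha)_{alpha in N^n},
    f(z) = sum_alpha f_alpha z^alpha, and <f,g> = sum_alpha f_alpha conj(g_alpha). *)

Definition mindex (n : nat) := 'I_n -> nat.

Definition coef (R : realType) (n : nat) := mindex n -> R[i].

Definition box_sum (R : realType) (n : nat) (F : mindex n -> R[i]) (N : nat) : R[i] :=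
  \sum_(a : {ffun 'I_n -> 'I_N}) F (fun i => nat_of_ord (a i)).

Definition inH2 (R : realType) (n : nat) (f : coef R n) : Prop :=
  exists M : R, forall N : nat,
    complex.Re (box_sum (fun a => f a * (f a)^*) N) <= M.

Definition h2inner (R : realType) (n : nat) (f g : coef R n) : R[i] :=
  let s := box_sum (fun a => f a * (g a)^*) in
  Complex (limn (fun N => complex.Re (s N) : R)) (limn (fun N => complex.Im (s N) : R)).

(** Szego kernel S(., w) = prod_i (1 - z_i conj(w_i))^{-1}
    = sum_alpha conj(w)^alpha z^alpha *)
Definition szego (R : realType) (n : nat) (w : 'I_n -> R[i]) : coef R n :=
  fun a => \prod_(i < n) ((w i)^*) ^+ (a i).

(** multiplication by the coordinate function z_i: T_{z_i} *)
Definition Tz (R : realType) (n : nat) (i : 'I_n) (f : coef R n) : coef R n :=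
  fun a => if a i == 0%N then 0
           else f (fun k => if k == i then (a k).-1 else a k).

Definition QZ (R : realType) (n m : nat) (z : 'I_m -> 'I_n -> R[i]) (f : coef R n) : Prop :=
  exists c : 'I_m -> R[i], f = fun a => \sum_(j < m) c j * szego (z j) a.

Definition PQ (R : realType) (n m : nat) (z : 'I_m -> 'I_n -> R[i]) (g : coef R n) : coef R n :=
  epsilon (inhabits (fun _ => 0))
    (fun p => QZ z p /\ forall q, QZ z q -> h2inner (fun a => g a - p a) q = 0).

Definition Sz (R : realType) (n m : nat) (z : 'I_m -> 'I_n -> R[i]) (i : 'I_n)
  (f : coef R n) : coef R n := PQ z (Tz i f).

(** bounded operators on Q_Z (finite-dimensional, so = linear maps Q_Z -> Q_Z);
    X is a function on coefficient families whose values off Q_Z are irrelevant *)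
Definition is_op_QZ (R : realType) (n m : nat) (z : 'I_m -> 'I_n -> R[i])
  (X : coef R n -> coef R n) : Prop :=
  (forall f, QZ z f -> QZ z (X f)) /\
  (forall (c : R[i]) f g, QZ z f -> QZ z g ->
     X (fun a => c * f a + g a) = (fun a => c * X f a + X g a)).

Definition adjQZ (R : realType) (n m : nat) (z : 'I_m -> 'I_n -> R[i])
  (X : coef R n -> coef R n) (g : coef R n) : coef R n :=
  epsilon (inhabits (fun _ => 0))
    (fun h => QZ z h /\ forall f, QZ z f -> h2inner (X f) g = h2inner f h).

Definition in_polydisc (R : realType) (n : nat) (w : 'I_n -> R[i]) : Prop :=
  forall i, `|w i| < 1.

From Stdlib Require Import ClassicalEpsilon.
From HB Require Import structures.
From mathcomp Require Import all_boot all_order all_algebra.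
From mathcomp Require Import all_classical all_reals all_analysis.
From mathcomp Require Import complex.
From mathcomp Require Import ring.
Import Order.TTheory GRing.Theory Num.Theory numFieldTopology.Exports numFieldNormedType.Exports.
Local Open Scope classical_set_scope.
Local Open Scope complex_scope.
Local Open Scope ring_scope.

Set Implicit Arguments.
Unset Strict Implicit.
Unset Printing Implicit Defensive.

(* In the coefficient model the Szego kernels k_j = S(., z_j) form a basis of
   Q_Z.  They are linearly independent because the backward shift in the i-th
   variable multiplies k_j by conj(z_j,i), and these scalars separate distinct
   points; their Gram matrix G_jk = <k_j, k_k> = S(z_k, z_j), a product of
   geometric series, is then invertible by positivity of the inner product.
   The same series give <T_{z_i} k_j, k_k> = z_k,i G_jk, so on coordinate row
   vectors S_{z_i} acts as G D_i G^-1 with D_i = diag(z_k,i), while X acts as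
   some matrix M.  Hence X commutes with all S_{z_i} iff N = G^-1 M G commutes
   with all D_i, i.e. iff N is diagonal (the points are distinct); and X^* k_k
   has coordinates conj(N_jk), so N is diagonal iff every k_k is an eigenvector
   of X^*. *)

(* Limits of complex sequences are taken for the norm of R[i] over itself. *)
HB.instance Definition _ (R : realType) := NormedModule.copy R[i] (R[i])^o.

Section ComplexLimits.
Variable R : realType.
Context {T : Type} (F : set_system T) {FF : Filter F}.

Lemma normc_ge_Im (x : R[i]) : `|complex.Im x|%:C <= `|x|.
Proof.
rewrite normc_def lecR -(sqrtr_sqr (complex.Im x)).
by apply: ler_wsqrtr; rewrite lerDr sqr_ge0.
Qed.

Lemma cvg_Re (f : T -> R[i]) L :
  f @ F --> L -> (fun x => complex.Re (f x)) @ F --> complex.Re L.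
Proof.
move=> /cvgrPdist_lt fL; apply/cvgrPdist_lt => e e_gt0.
apply: filterS (fL e%:C _) => [x|]; last by rewrite ltcR.
by rewrite -raddfB /= -ltcR; apply: le_lt_trans (normc_ge_Re _).
Qed.

Lemma cvg_Im (f : T -> R[i]) L :
  f @ F --> L -> (fun x => complex.Im (f x)) @ F --> complex.Im L.
Proof.
move=> /cvgrPdist_lt fL; apply/cvgrPdist_lt => e e_gt0.
apply: filterS (fL e%:C _) => [x|]; last by rewrite ltcR.
by rewrite -raddfB /= -ltcR; apply: le_lt_trans (normc_ge_Im _).
Qed.

Lemma normc_real (x : R) : `|x%:C| = `|x|%:C.
Proof. by rewrite normc_def /= expr0n addr0 sqrtr_sqr. Qed.

Lemma cvg_real_complex (f : T -> R) (l : R) :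
  f @ F --> l -> (fun x => (f x)%:C) @ F --> l%:C.
Proof.
move=> /cvgrPdist_lt fl; apply/cvgrPdist_lt => e.
rewrite ltcE /= => /andP[/eqP Ie Re_gt0]; apply: filterS (fl _ Re_gt0) => x.
have -> : e = (complex.Re e)%:C by case: e Ie {Re_gt0} => a b /= ->.
by rewrite -rmorphB normc_real ltcR.
Qed.

End ComplexLimits.

Section GeometricSeries.
Variable R : realType.

Lemma cvg_exprC (q : R[i]) : `|q| < 1 -> (fun N => q ^+ N) @ \oo --> 0.
Proof.
move=> q_lt1; have /RRe_real q_real := normr_real q.
set r := complex.Re `|q| in q_real.
have r_ge0 : 0 <= r by rewrite -lecR q_real normr_ge0.
have r_lt1 : `|r| < 1 by rewrite ger0_norm // -ltcR q_real.
apply: norm_cvg0; under eq_fun do rewrite normrX -q_real -rmorphXn.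
exact: cvg_real_complex (cvg_expr r_lt1).
Qed.

Lemma cvg_geometric_seriesC (q : R[i]) : `|q| < 1 ->
  (fun N => \sum_(t < N) q ^+ t) @ \oo --> (1 - q)^-1.
Proof.
move=> q_lt1; have q_neq1 : 1 - q != 0.
  by rewrite subr_eq0; apply: contraTneq q_lt1 => <-; rewrite normr1 ltxx.
have -> : (fun N => \sum_(t < N) q ^+ t) = (fun N => (1 - q ^+ N) * (1 - q)^-1).
  apply: funext => N; apply: (mulIf q_neq1); rewrite mulfVK //.
  by rewrite -[LHS]opprK -mulrN opprB mulrC -subrX1 opprB.
rewrite -[X in _ --> X]mul1r -[X in X * _](subr0 1).
exact: cvgMr_tmp (cvgB (cvg_cst _) (cvg_exprC q_lt1)).
Qed.

End GeometricSeries.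

Section BoxInner.
Variables (R : realType) (n : nat).
Implicit Types (f g : coef R n) (w v : 'I_n -> R[i]).

Definition box_inner f g (N : nat) : R[i] := box_sum (fun a => f a * (g a)^*) N.

Lemma h2inner_cvg f g L : box_inner f g @ \oo --> L -> h2inner f g = L.
Proof.
move=> fgL; rewrite /h2inner (cvg_lim _ (cvg_Re fgL)) // (cvg_lim _ (cvg_Im fgL)) //.
by case: L {fgL}.
Qed.

Lemma box_innerB f f' g :
  box_inner (fun a => f a - f' a) g = box_inner f g - box_inner f' g.
Proof.
apply: funext => N; rewrite /box_inner /box_sum !fctE -sumrB.
by apply: eq_bigr => a _; rewrite mulrBl.
Qed.

Lemma box_inner_sum (I J : finType) (c : I -> R[i]) (d : J -> R[i])
    (f : I -> coef R n) (g : J -> coef R n) N :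
  box_inner (fun a => \sum_p c p * f p a) (fun a => \sum_q d q * g q a) N =
  \sum_p \sum_q c p * (d q)^* * box_inner (f p) (g q) N.
Proof.
rewrite /box_inner /box_sum.
under eq_bigr do rewrite rmorph_sum mulr_suml; rewrite exchange_big.
apply: eq_bigr => p _; under eq_bigr do rewrite mulr_sumr; rewrite exchange_big.
apply: eq_bigr => q _; rewrite mulr_sumr; apply: eq_bigr => a _.
by rewrite rmorphM /=; ring.
Qed.

Lemma cvg_box_inner_sum (I J : finType) (c : I -> R[i]) (d : J -> R[i])
    (f : I -> coef R n) (g : J -> coef R n) (L : I -> J -> R[i]) :
  (forall p q, box_inner (f p) (g q) @ \oo --> L p q) ->
  (fun N => box_inner (fun a => \sum_p c p * f p a) (fun a => \sum_q d q * g q a) N)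
    @ \oo --> \sum_p \sum_q c p * (d q)^* * L p q.
Proof.
move=> fgL; under eq_fun do rewrite box_inner_sum.
apply: cvg_big => [|p _]; first exact: add_continuous.
apply: cvg_big => [|q _]; first exact: add_continuous.
exact: cvgMl_tmp.
Qed.

Lemma box_inner_self_ge f a N : (forall i, (a i < N)%N) -> `|f a| ^+ 2 <= box_inner f f N.
Proof.
move=> a_lt; pose b : {ffun 'I_n -> 'I_N} := [ffun i => Ordinal (a_lt i)].
have -> : a = (fun i => nat_of_ord (b i)) by apply: funext => i; rewrite ffunE.
rewrite /box_inner /box_sum (bigD1 b) //= sqr_normc lerDl.
by apply: sumr_ge0 => b' _; rewrite -sqr_normc exprn_ge0.
Qed.

Lemma box_inner_self_cvg0 f : box_inner f f @ \oo --> 0 -> forall a, f a = 0.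
Proof.
move=> /cvgrPdist_lt ff0 a; apply/eqP; rewrite -normr_eq0 -sqrf_eq0.
apply: contraT => fa_neq0.
have fa_gt0 : 0 < `|f a| ^+ 2 by rewrite lt_def fa_neq0 exprn_ge0.
have [N0 _ ffN] := ff0 _ fa_gt0.
pose N := maxn N0 (\sum_i a i).+1.
have a_lt i : (a i < N)%N.
  by rewrite leq_max ltnS (bigD1 i) //= leq_addr orbT.
have fa_le := box_inner_self_ge f a_lt.
have := ffN N (leq_maxl _ _); rewrite /= sub0r normrN ger0_norm.
  by move=> /(le_lt_trans fa_le); rewrite ltxx.
exact: le_trans (exprn_ge0 _ (normr_ge0 _)) fa_le.
Qed.

Lemma box_sum_prod (h : 'I_n -> nat -> R[i]) N :
  box_sum (fun a => \prod_i h i (a i)) N = \prod_i \sum_(t < N) h i t.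
Proof. by rewrite /box_sum (bigA_distr_bigA (fun i (t : 'I_N) => h i t)). Qed.

Definition szegoK w v : R[i] := \prod_i (1 - w i * (v i)^*)^-1.

Lemma conj_szego w a : (szego w a)^* = \prod_i w i ^+ a i.
Proof.
by rewrite rmorph_prod; apply: eq_bigr => i _; rewrite rmorphXn /= conjCK.
Qed.

Lemma polydisc_mul_conj_lt1 w v i :
  in_polydisc w -> in_polydisc v -> `|v i * (w i)^*| < 1.
Proof.
move=> /(_ i) w_lt1 /(_ i) v_lt1; rewrite normrM norm_conjC.
by apply: le_lt_trans w_lt1; rewrite ler_piMl // ltW.
Qed.

Lemma cvg_box_inner_szego w v : in_polydisc w -> in_polydisc v ->
  box_inner (szego w) (szego v) @ \oo --> szegoK v w.
Proof.
move=> Dw Dv.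
have -> : box_inner (szego w) (szego v) =
    (fun N => \prod_i \sum_(t < N) (v i * (w i)^*) ^+ t).
  apply: funext => N; rewrite -(box_sum_prod (fun i t => (v i * (w i)^*) ^+ t)).
  apply: eq_bigr => a _; rewrite conj_szego -big_split; apply: eq_bigr => i _.
  by rewrite exprMn mulrC.
apply: cvg_big => [|i _]; first exact: mul_continuous.
exact: cvg_geometric_seriesC (polydisc_mul_conj_lt1 _ Dw Dv).
Qed.

Lemma cvg_box_inner_Tz_szego i w v : in_polydisc w -> in_polydisc v ->
  box_inner (Tz i (szego w)) (szego v) @ \oo --> v i * szegoK v w.
Proof.
move=> Dw Dv; pose q l := v l * (w l)^*.
pose h l t := if l == i then (if t is t'.+1 then v l * q l ^+ t' else 0) else q l ^+ t.
have -> : box_inner (Tz i (szego w)) (szego v) =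
    (fun N => \prod_l \sum_(t < N) h l t).
  apply: funext => N; rewrite -(box_sum_prod h); apply: eq_bigr => a _.
  rewrite /Tz; case: ifPn => [/eqP ai0 | ai_neq0].
    by rewrite mul0r (bigD1 i) //= /h eqxx ai0 mul0r.
  rewrite conj_szego -big_split; apply: eq_bigr => l _ /=.
  rewrite /h; case: eqP => [-> | _]; last by rewrite exprMn mulrC.
  by move: ai_neq0; case: (nat_of_ord (a i)) => // t _; rewrite /q exprS exprMn; ring.
have -> : v i * szegoK v w =
    \prod_l (if l == i then v l * (1 - q l)^-1 else (1 - q l)^-1).
  rewrite /szegoK (bigD1 i) //= [RHS](bigD1 i) //= eqxx mulrA.
  by congr (_ * _); apply: eq_bigr => l /negbTE ->.
apply: cvg_big => [|l _]; first exact: mul_continuous.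
have q_lt1 := cvg_geometric_seriesC (polydisc_mul_conj_lt1 l Dw Dv).
rewrite /h; case: eqP => [_ | _]; last exact: q_lt1.
rewrite -cvg_shiftS /=; under eq_fun do rewrite big_ord_recl add0r -mulr_sumr.
exact: cvgMl_tmp.
Qed.

Definition incr (a : mindex n) i : mindex n :=
  fun l => if l == i then (a l).+1 else a l.

Lemma szego_incr w a i : szego w (incr a i) = (w i)^* * szego w a.
Proof.
rewrite /szego (bigD1 i) //= [in RHS](bigD1 i) //= /incr eqxx exprS -mulrA.
by congr (_ * (_ * _)); apply: eq_bigr => l /negbTE ->.
Qed.

Lemma szego_mindex0 w : szego w (fun _ => 0%N) = 1.
Proof. by rewrite /szego big1. Qed.

End BoxInner.

Lemma epsilon_eq (A : Type) (inhA : inhabited A) (P : A -> Prop) x :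
  P x -> (forall y, P y -> y = x) -> epsilon inhA P = x.
Proof. by move=> Px P_eq; apply: P_eq; apply: epsilon_spec; exists x. Qed.

Section CommutingMatrices.
Variable F : fieldType.

Lemma comm_conjmx k (V f g : 'M[F]_k) : V \in unitmx ->
  comm_mx (conjmx V f) g <-> comm_mx f (conjmx (invmx V) g).
Proof.
move=> V_unit; rewrite /comm_mx conjumx // conjVmx //.
split=> fg.
  have := congr1 (fun h => invmx V *m h *m V) fg.
  by rewrite !mulmxA mulVmx // mul1mx mulmxKV.
have := congr1 (fun h => V *m h *m invmx V) fg.
by rewrite !mulmxA mulmxV // mul1mx mulmxK.
Qed.

Lemma comm_diag_mx_is_diag (I : Type) k (d : I -> 'rV[F]_k) (N : 'M[F]_k) :
  (forall j l, j != l -> exists i, d i 0 j != d i 0 l) ->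
  (forall i, comm_mx (diag_mx (d i)) N) <-> is_diag_mx N.
Proof.
move=> d_sep; split=> [comm | /is_diag_mxP N_diag i].
  apply/is_diag_mxP => j l jl; have [i dij] := d_sep j l jl.
  have /eqP := congr1 (fun A : 'M[F]_(k) => A j l) (comm i : _ = _).
  rewrite mul_diag_mx mul_mx_diag !mxE mulrC -subr_eq0 -mulrBr mulf_eq0 subr_eq0.
  by rewrite (negbTE dij) orbF => /eqP.
apply/matrixP => j l; rewrite mul_diag_mx mul_mx_diag !mxE.
by have [-> | jl] := eqVneq j l; [rewrite mulrC | rewrite N_diag // mulr0 mul0r].
Qed.

End CommutingMatrices.

Section SzegoKernels.
Variables (R : realType) (n m : nat) (z : 'I_m -> 'I_n -> R[i]).
Hypothesis z_polydisc : forall j, in_polydisc (z j).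
Implicit Types (c d e : 'rV[R[i]]_m).

Definition kcomb c : coef R n := fun a => \sum_j c 0 j * szego (z j) a.

Definition gram : 'M[R[i]]_m := \matrix_(j, k) szegoK (z k) (z j).

Definition zdiag i : 'M[R[i]]_m := diag_mx (\row_k z k i).

Lemma kcombZD x c d : kcomb (x *: c + d) = fun a => x * kcomb c a + kcomb d a.
Proof.
apply: funext => a; rewrite /kcomb mulr_sumr -big_split /=.
by apply: eq_bigr => j _; rewrite !mxE mulrDl mulrA.
Qed.

Lemma kcomb0 : kcomb 0 = fun _ => 0.
Proof. by apply: funext => a; apply: big1 => j _; rewrite mxE mul0r. Qed.

Lemma kcomb_delta k : kcomb (delta_mx 0 k) = szego (z k).
Proof.
apply: funext => a; rewrite /kcomb (bigD1 k) //= mxE !eqxx mul1r big1 ?addr0 //.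
by move=> j /negbTE jk; rewrite mxE jk andbF mul0r.
Qed.

Lemma kcomb_mindex0 c : kcomb c (fun _ => 0%N) = \sum_j c 0 j.
Proof. by apply: eq_bigr => j _; rewrite szego_mindex0 mulr1. Qed.

Lemma sum_conj_delta (v : 'rV[R[i]]_m) k :
  \sum_l ((delta_mx 0 k : 'rV[R[i]]_m) 0 l)^* * v 0 l = v 0 k.
Proof.
rewrite (bigD1 k) //= mxE !eqxx conjC1 mul1r big1 ?addr0 //.
by move=> l /negbTE lk; rewrite mxE lk andbF conjC0 mul0r.
Qed.

Lemma cvg_box_inner_kcomb c d :
  box_inner (kcomb c) (kcomb d) @ \oo --> \sum_k (d 0 k)^* * (c *m gram) 0 k.
Proof.
have -> : \sum_k (d 0 k)^* * (c *m gram) 0 k =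
    \sum_j \sum_k c 0 j * (d 0 k)^* * szegoK (z k) (z j).
  rewrite exchange_big; apply: eq_bigr => k _; rewrite mxE mulr_sumr.
  by apply: eq_bigr => j _; rewrite mxE mulrCA mulrA.
exact: cvg_box_inner_sum (fun j k => cvg_box_inner_szego (z_polydisc j) (z_polydisc k)).
Qed.

Lemma h2inner_kcomb c d :
  h2inner (kcomb c) (kcomb d) = \sum_k (d 0 k)^* * (c *m gram) 0 k.
Proof. exact/h2inner_cvg/cvg_box_inner_kcomb. Qed.

Lemma h2inner_Tz_kcomb i c e d :
  h2inner (fun a => Tz i (kcomb c) a - kcomb e a) (kcomb d) =
  \sum_k (d 0 k)^* * (c *m gram *m zdiag i - e *m gram) 0 k.
Proof.
apply: h2inner_cvg; rewrite box_innerB.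
have -> : \sum_k (d 0 k)^* * (c *m gram *m zdiag i - e *m gram) 0 k =
    \sum_j \sum_k c 0 j * (d 0 k)^* * (z k i * szegoK (z k) (z j)) -
    \sum_k (d 0 k)^* * (e *m gram) 0 k.
  rewrite exchange_big -sumrB; apply: eq_bigr => k _.
  rewrite /zdiag mul_mx_diag !mxE mulrBr mulr_suml mulr_sumr; congr (_ - _).
  by apply: eq_bigr => j _; rewrite !mxE; ring.
apply: cvgB; last exact: cvg_box_inner_kcomb.
have -> : Tz i (kcomb c) = fun a => \sum_j c 0 j * Tz i (szego (z j)) a.
  apply: funext => a; rewrite /Tz; case: ifP => // _.
  by rewrite big1 // => j _; rewrite mulr0.
exact: cvg_box_inner_sum
  (fun j k => cvg_box_inner_Tz_szego (i := i) (z_polydisc j) (z_polydisc k)).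
Qed.

Lemma kcomb_incr c l i a :
  kcomb (\row_j (c 0 j * ((z j i)^* - (z l i)^*))) a =
  kcomb c (incr a i) - (z l i)^* * kcomb c a.
Proof.
rewrite /kcomb mulr_sumr -sumrB; apply: eq_bigr => j _.
by rewrite mxE szego_incr; ring.
Qed.

Section DistinctPoints.
Hypothesis z_inj : injective z.

Lemma z_separates j k : j != k -> exists i, z j i != z k i.
Proof.
move=> jk; apply/existsP; apply: contraNT jk => /existsPn z_eq.
by apply/eqP/z_inj/funext => i; apply/eqP/negPn/z_eq.
Qed.

Lemma kcomb_eq0 c : kcomb c = (fun _ => 0) -> c = 0.
Proof.
move=> c0; apply/rowP => k; rewrite mxE.
pose factor j (p : 'I_m * 'I_n) := (z j p.2)^* - (z p.1 p.2)^*.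
have annihilated (s : seq ('I_m * 'I_n)) :
    kcomb (\row_j (c 0 j * \prod_(p <- s) factor j p)) = (fun _ => 0).
  elim: s => [|[l i] s IHs].
    by rewrite -c0; congr kcomb; apply/rowP => j; rewrite mxE big_nil mulr1.
  set c' := \row_j (c 0 j * \prod_(p <- s) factor j p) in IHs.
  have -> : \row_j (c 0 j * \prod_(p <- (l, i) :: s) factor j p) =
      \row_j (c' 0 j * ((z j i)^* - (z l i)^*)).
    by apply/rowP => j; rewrite !mxE big_cons [factor j _ * _]mulrC mulrA.
  by apply: funext => a; rewrite kcomb_incr IHs mulr0 subrr.
(* The factors indexed by s kill every coordinate but the k-th, which they keep. *)
pose s := enum [pred p : 'I_m * 'I_n | z p.1 p.2 != z k p.2].
have := congr1 (fun f => f (fun _ => 0%N)) (annihilated s).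
rewrite /= kcomb_mindex0 (bigD1 k) //= big1 ?addr0 => [|j jk]; last first.
  have [i zji] := z_separates jk; rewrite mxE (big_rem (j, i)) /=.
    by rewrite /factor subrr mul0r mulr0.
  by rewrite mem_enum inE.
rewrite mxE => /eqP; rewrite mulf_eq0 => /orP[/eqP // | ].
rewrite prodf_seq_eq0 => /hasP[[l i]]; rewrite mem_enum inE /= /factor => zli.
by rewrite subr_eq0 (inj_eq (can_inj conjCK)) eq_sym (negbTE zli).
Qed.

Lemma kcomb_inj : injective kcomb.
Proof.
move=> c d cd; apply/eqP; rewrite -subr_eq0; apply/eqP/kcomb_eq0.
rewrite -[c - d]addrC -scaleN1r kcombZD cd.
by apply: funext => a; rewrite mulN1r addNr.
Qed.

Lemma gram_unit : gram \in unitmx.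
Proof.
rewrite -row_free_unit; apply: inj_row_free => c cG0; apply: kcomb_eq0.
apply: funext; apply: box_inner_self_cvg0.
have := cvg_box_inner_kcomb (c := c) (d := c); rewrite cG0 big1 // => k _.
by rewrite mxE mulr0.
Qed.

Lemma QZ_kcomb c : QZ z (kcomb c).
Proof. by exists (c 0). Qed.

Lemma QZ_szego k : QZ z (szego (z k)).
Proof. by rewrite -kcomb_delta; apply: QZ_kcomb. Qed.

Lemma QZ_kcombP f : QZ z f -> exists c, f = kcomb c.
Proof.
move=> [d ->]; exists (\row_j d j).
by apply: funext => a; apply: eq_bigr => j _; rewrite mxE.
Qed.

Lemma Sz_kcomb i c : Sz z i (kcomb c) = kcomb (c *m conjmx gram (zdiag i)).
Proof.
have conj_gram : conjmx gram (zdiag i) *m gram = gram *m zdiag i.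
  by rewrite conjumx ?gram_unit // mulmxKV ?gram_unit.
apply: epsilon_eq => [|p [/QZ_kcombP[e ->] orth]].
  split => [|q /QZ_kcombP[d ->]]; first exact: QZ_kcomb.
  rewrite h2inner_Tz_kcomb -[_ *m conjmx _ _ *m _]mulmxA conj_gram mulmxA subrr.
  by rewrite big1 // => k _; rewrite mxE mulr0.
congr kcomb.
have eG : e *m gram = c *m gram *m zdiag i.
  apply/rowP => k; apply/eqP; rewrite eq_sym -subr_eq0.
  have := orth _ (QZ_kcomb (delta_mx 0 k)).
  by rewrite h2inner_Tz_kcomb sum_conj_delta !mxE => ->.
by rewrite -[e](mulmxK gram_unit) eG conjumx ?gram_unit // !mulmxA.
Qed.

Section Operator.
Variables (X : coef R n -> coef R n) (M : 'M[R[i]]_m).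
Hypothesis X_op : is_op_QZ z X.
Hypothesis X_szego : forall j, X (szego (z j)) = kcomb (row j M).

Lemma X_kcomb c : X (kcomb c) = kcomb (c *m M).
Proof.
have [_ X_lin] := X_op.
have X0 : X (kcomb 0) = kcomb 0.
  have := X_lin 1 _ _ (QZ_kcomb 0) (QZ_kcomb 0); rewrite -kcombZD scale1r addr0 kcomb0.
  move=> X0_eq; apply: funext => a; have := congr1 (fun f => f a) X0_eq.
  by rewrite mul1r -{1}[X _ a]addr0 => /addrI/esym.
have X_partial (r : seq 'I_m) : X (kcomb (\sum_(j <- r) c 0 j *: delta_mx 0 j)) =
    kcomb (\sum_(j <- r) c 0 j *: row j M).
  elim: r => [|j r IHr]; first by rewrite !big_nil.
  rewrite !big_cons !kcombZD X_lin; [|exact: QZ_kcomb..].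
  by apply: funext => a; rewrite IHr kcomb_delta X_szego.
by rewrite mulmx_sum_row -X_partial -row_sum_delta.
Qed.

Lemma adjQZ_szego k :
  adjQZ z X (szego (z k)) = kcomb (\row_j ((conjmx (invmx gram) M) j k)^*).
Proof.
set N := conjmx (invmx gram) M.
have N_def : invmx gram *m (M *m gram) = N by rewrite /N conjVmx ?gram_unit ?mulmxA.
have GN : gram *m N = M *m gram by rewrite -N_def mulKVmx ?gram_unit.
apply: epsilon_eq => [|h [/QZ_kcombP[y ->] adj]].
  split=> [|f /QZ_kcombP[c ->]]; first exact: QZ_kcomb.
  rewrite X_kcomb -kcomb_delta !h2inner_kcomb sum_conj_delta.
  rewrite -mulmxA -GN mulmxA mxE.
  by apply: eq_bigr => l _; rewrite [in RHS]mxE conjCK mulrC.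
congr kcomb; apply/rowP => j; rewrite mxE.
have := adj _ (QZ_kcomb (delta_mx 0 j *m invmx gram)).
rewrite X_kcomb -kcomb_delta !h2inner_kcomb sum_conj_delta mulmxKV ?gram_unit //.
rewrite -!mulmxA N_def -rowE mxE (bigD1 j) //= [delta_mx 0 j 0 j]mxE !eqxx mulr1.
rewrite big1 ?addr0.
  by move=> ->; rewrite conjCK.
by move=> l /negbTE lj; rewrite mxE lj mulr0.
Qed.

Lemma Sz_commute_iff :
  (forall i : 'I_n, forall f, QZ z f -> X (Sz z i f) = Sz z i (X f)) <->
  (forall i, comm_mx (zdiag i) (conjmx (invmx gram) M)).
Proof.
have Sz_comm i : (forall f, QZ z f -> X (Sz z i f) = Sz z i (X f)) <->
    comm_mx (conjmx gram (zdiag i)) M.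
  split=> [comm | AM f /QZ_kcombP[c ->]].
    apply/row_matrixP => j; rewrite !rowE (mulmxA _ _ M) (mulmxA _ M).
    apply: kcomb_inj; have := comm _ (QZ_kcomb (delta_mx 0 j)).
    by rewrite Sz_kcomb !X_kcomb Sz_kcomb.
  by rewrite Sz_kcomb !X_kcomb Sz_kcomb -(mulmxA _ _ M) -(mulmxA _ M) AM.
split=> comm i; [apply/comm_conjmx/Sz_comm | apply/Sz_comm/comm_conjmx];
  by [apply: gram_unit | apply: comm].
Qed.

Lemma adjQZ_eigen_iff :
  (exists w : 'I_m -> R[i], forall j : 'I_m,
     adjQZ z X (szego (z j)) = (fun a => w j * szego (z j) a)) <->
  is_diag_mx (conjmx (invmx gram) M).
Proof.
have scaled_szego w k : (fun a => w * szego (z k) a) = kcomb (w *: delta_mx 0 k).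
  by rewrite -[_ *: _]addr0 kcombZD kcomb0 kcomb_delta; apply: funext => a; rewrite addr0.
split=> [[w adj] | /is_diag_mxP N_diag].
  apply/is_diag_mxP => j k jk; apply/eqP; rewrite -conjC_eq0.
  have jk_false : (j == k) = false by exact: negPf jk.
  have := adj k; rewrite adjQZ_szego scaled_szego => /kcomb_inj/rowP/(_ j).
  by rewrite [LHS]mxE [RHS]mxE [delta_mx _ _ _ _]mxE jk_false andbF mulr0 => ->.
exists (fun k => ((conjmx (invmx gram) M) k k)^*) => k.
rewrite adjQZ_szego scaled_szego; congr kcomb; apply/rowP => j.
rewrite [LHS]mxE [RHS]mxE [delta_mx _ _ _ _]mxE eqxx /=.
have [-> | jk] := eqVneq j k; first by rewrite mulr1.
by rewrite N_diag // conjC0 mulr0.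
Qed.

End Operator.

End DistinctPoints.

End SzegoKernels.

Theorem lemma6p3 (R : realType) (n m : nat) (z : 'I_m -> 'I_n -> R[i])
  (X : coef R n -> coef R n) :
  (0 < n)%N ->
  injective z ->
  (forall j, in_polydisc (z j)) ->
  is_op_QZ z X ->
  (forall i : 'I_n, forall f, QZ z f -> X (Sz z i f) = Sz z i (X f)) <->
  (exists w : 'I_m -> R[i], forall j : 'I_m,
     adjQZ z X (szego (z j)) = (fun a => w j * szego (z j) a)).
Proof.
move=> _ z_inj z_polydisc X_op.
have /fin_all_exists[c X_szego] : forall j, exists c, X (szego (z j)) = kcomb z c.
  by move=> j; apply/QZ_kcombP/X_op.1/QZ_szego.
pose M := \matrix_j c j.
have X_szegoM j : X (szego (z j)) = kcomb z (row j M) by rewrite rowK.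
rewrite (Sz_commute_iff z_polydisc z_inj X_op X_szegoM).
rewrite (adjQZ_eigen_iff z_polydisc z_inj X_op X_szegoM).
apply: comm_diag_mx_is_diag => j k /(z_separates z_inj)[i zi].
by exists i; rewrite !mxE.
Qed.
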